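(* Let $(X,* )$ be a commutative hypergroup and let $(T_k)_{k\ge1}$ be a sequence of hypergroup automorphisms of $X$ which converges pointwise to a continuous map $T:X\to X$ such that $T(X)$ is closed in $X$. Then $T(X)$ is a subhypergroup of $X$ and $T(\delta_x*\delta_{\bar y})=\delta_{T(x)}*\delta_{\overline{T(y)}}$ for all $x,y\in X$, i.e. $T$ is a hypergroup homomorphism from $X$ onto $T(X)$.
   Context: A hypergroup $(X,* )$ is a locally compact Hausdorff space $X$ with a bilinear, associative, weakly continuous, probability preserving convolution $*$ on the bounded regular Borel measures $M_b(X)$ with $\mathrm{supp}(\delta_x*\delta_y)$ compact, an identity $e$ and a continuous involution $x\mapsto\bar x$ with $e\in\mathrm{supp}(\delta_x*\delta_y)\iff x=\bar y$ and $\delta_{\bar x}*\delta_{\bar y}=(\delta_y*\delta_x)^-$. A closed set $H\subset X$ is a subhypergroup if $\bar x\in H$ and $\mathrm{supp}(\delta_x*\delta_y)\subset H$ for all $x,y\in H$. A continuous map $T:X\to Y$ between hypergroups is a hypergroup homomorphism if $T(\delta_x*\delta_{\bar y})=\delta_{T(x)}*\delta_{\overline{T(y)}}$ for all $x,y$, where $T$ acts on measures by taking image measures; an automorphism is a homomorphism $X\to X$ which is a homeomorphism with homomorphic inverse. *)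

From HB Require Import structures.
From mathcomp Require Import all_boot all_order all_algebra.
From mathcomp Require Import all_classical all_reals all_analysis.
Set Implicit Arguments. Unset Strict Implicit. Unset Printing Implicit Defensive.
Import Order.TTheory GRing.Theory Num.Theory.
Import numFieldNormedType.Exports.
Local Open Scope classical_set_scope.
Local Open Scope ring_scope.

Notation borelT X := (g_sigma_algebraType (@open X)).

Section Hypergroup.
Variables (R : realType) (X : ptopologicalType).

(* a point-mass convolution kernel: conv x y = delta_x * delta_y,
   a probability measure on the Borel sets of X *)
Local Notation kernel := (X -> X -> probability (borelT X) R).

Definition msupp (mu : set (borelT X) -> \bar R) : set X :=
  [set z | forall U : set X, open U -> U z -> (0 < mu U)%E].

Definition regular_measure (mu : set (borelT X) -> \bar R) : Prop :=
  forall A : set (borelT X), measurable A ->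
  forall eps : R, 0 < eps ->
    (exists U : set X, [/\ open U, A `<=` U & (mu U <= mu A + eps%:E)%E]) /\
    (exists K : set X, [/\ compact K, K `<=` A & (mu A <= mu K + eps%:E)%E]).

Definition bounded_continuous (f : X -> R) : Prop :=
  continuous f /\ exists M : R, forall x, `|f x| <= M.

(* The convolution on M_b(X) is the
   unique bilinear weakly continuous extension of the point-mass convolution
   (mu * nu)(f) = \int \int (delta_x * delta_y)(f) dmu(x) dnu(y); we state the
   axioms on point masses. *)
Record hypergroup (conv : kernel) (e : X) (inv : X -> X) : Prop := {
  hg_hausdorff : hausdorff_space X;
  hg_locally_compact : locally_compact [set: X];
  hg_regular : forall x y, regular_measure (conv x y);
  hg_weak_cont : forall f : X -> R, bounded_continuous f ->
      continuous (fun p : X * X => Rintegral (conv p.1 p.2) setT f);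
  hg_assoc : forall x y z (f : X -> R), bounded_continuous f ->
      Rintegral (conv x y) setT (fun u => Rintegral (conv u z) setT f) =
      Rintegral (conv y z) setT (fun v => Rintegral (conv x v) setT f);
  hg_supp_compact : forall x y, compact (msupp (conv x y));
  hg_unit_l : forall x (A : set (borelT X)), measurable A -> conv e x A = \d_(x : borelT X) A;
  hg_unit_r : forall x (A : set (borelT X)), measurable A -> conv x e A = \d_(x : borelT X) A;
  hg_inv_cont : continuous inv;
  hg_inv_invol : forall x, inv (inv x) = x;
  hg_supp_e : forall x y, msupp (conv x y) e <-> x = inv y;
  hg_inv_conv : forall x y (A : set (borelT X)), measurable A ->
      conv (inv x) (inv y) A = conv y x (inv @^-1` A)
}.

Definition commutative_hypergroup (conv : kernel) (e : X) (inv : X -> X) : Prop :=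
  hypergroup conv e inv /\ forall x y, conv x y = conv y x.

Definition subhypergroup (conv : kernel) (inv : X -> X) (H : set X) : Prop :=
  [/\ closed H, forall x, H x -> H (inv x)
    & forall x y, H x -> H y -> msupp (conv x y) `<=` H].

(* T(delta_x * delta_{inv y}) = delta_{T x} * delta_{inv (T y)}, T acting on
   measures by image measures *)
Definition hg_hom_eq (conv : kernel) (inv : X -> X) (T : X -> X) : Prop :=
  forall x y (A : set (borelT X)), measurable A ->
    conv x (inv y) (T @^-1` A) = conv (T x) (inv (T y)) A.

Definition hg_homomorphism (conv : kernel) (inv : X -> X) (T : X -> X) : Prop :=
  continuous T /\ hg_hom_eq conv inv T.

Definition hg_automorphism (conv : kernel) (inv : X -> X) (T : X -> X) : Prop :=
  exists S : X -> X, [/\ cancel T S, cancel S T,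
    hg_homomorphism conv inv T & hg_homomorphism conv inv S].

End Hypergroup.

From HB Require Import structures.
From mathcomp Require Import all_boot all_order all_algebra.
From mathcomp Require Import all_classical all_reals all_analysis.
From mathcomp Require Import measurable_realfun.
Set Implicit Arguments. Unset Strict Implicit. Unset Printing Implicit Defensive.
Import Order.TTheory GRing.Theory Num.Theory.
Import numFieldNormedType.Exports.
Local Open Scope classical_set_scope.
Local Open Scope ring_scope.

(* Weak continuity of the convolution and dominated convergence give
   \int f o T d(delta_x * delta_{inv y}) = \int f d(delta_{T x} * delta_{inv (T y)})
   for every bounded continuous f.  On a locally compact Hausdorff space,
   Urysohn functions squeezed between a compact K contained in T^-1 A and an
   open U containing T K turn this, by regularity, into
   T(delta_x * delta_{inv y}) A <= (delta_{T x} * delta_{inv (T y)}) A, and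
   the complement of A gives the reverse inequality.  For the resulting
   homomorphism, x = y = e shows T e = e, hence T commutes with the
   involution, and an open set missing the range of T has empty preimage,
   so it carries no mass of delta_{T x} * delta_{T y}. *)

Section BorelMeasurability.
Variables (R : realType) (X : ptopologicalType).

Lemma borel_open_measurable (U : set X) : open U -> measurable (U : set (borelT X)).
Proof. by move=> oU; apply: sub_sigma_algebra. Qed.

Lemma borel_closed_measurable (C : set X) :
  closed C -> measurable (C : set (borelT X)).
Proof.
move=> cC; rewrite -(setCK C); apply: measurableC; apply: borel_open_measurable.
exact: closed_openC.
Qed.

Lemma continuous_borel_measurable_real (f : X -> R) :
  continuous f -> measurable_fun (setT : set (borelT X)) f.
Proof.
move=> /continuousP cf; apply: (measurability _ (RGenOpens.measurableE R)).
move=> _ [_ [a [b ->] <-]]; rewrite setTI; apply: borel_open_measurable.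
exact/cf/interval_open.
Qed.

Lemma continuous_borel_measurable (T : X -> X) :
  continuous T -> measurable_fun (setT : set (borelT X)) (T : borelT X -> borelT X).
Proof.
move=> /continuousP cT.
apply: (@measurability _ _ (borelT X) (borelT X) setT T (@open X) erefl).
by move=> _ [B oB <-]; rewrite setTI; apply: borel_open_measurable; exact: cT.
Qed.

Lemma continuous_preimage_measurable (T : X -> X) (A : set (borelT X)) :
  continuous T -> measurable A -> measurable (T @^-1` A : set (borelT X)).
Proof.
move=> cT mA; rewrite -(setTI (T @^-1` A)).
exact: (continuous_borel_measurable cT measurableT mA).
Qed.

End BorelMeasurability.

Section BoundedContinuousIntegrals.
Variables (R : realType) (X : ptopologicalType).

Lemma bounded_continuous_comp (f : X -> R) (S : X -> X) :
  bounded_continuous f -> continuous S -> bounded_continuous (f \o S).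
Proof.
move=> [cf [M fM]] cS; split; last by exists M => x; exact: fM.
by move=> x; apply: continuous_comp; [exact: cS | exact: cf].
Qed.

Lemma bounded_continuous_integrable (mu : probability (borelT X) R) (f : X -> R) :
  bounded_continuous f -> mu.-integrable setT (EFin \o f).
Proof.
move=> [cf [M fM]]; apply: measurable_bounded_integrable => //.
- by apply: (le_lt_trans (probability_le1 mu measurableT)); exact: ltry.
- exact: continuous_borel_measurable_real.
- rewrite /bounded_near; near=> M0; rewrite /globally /= => t _.
  apply: le_trans (fM t) _.
  by near: M0; apply: nbhs_pinfty_ge; exact: num_real.
Unshelve. all: end_near. Qed.

Lemma integral_bounded_continuousE (mu : probability (borelT X) R) (f : X -> R) :
  bounded_continuous f -> (\int[mu]_z (f z)%:E)%E = (Rintegral mu setT f)%:E.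
Proof.
move=> bf; rewrite /Rintegral fineK //; apply: integrable_fin_num => //.
exact: bounded_continuous_integrable.
Qed.

Lemma integral_pushforward_bounded_continuous (mu rho : probability (borelT X) R)
    (S : X -> X) (f : X -> R) :
  continuous S ->
  (forall A : set (borelT X), measurable A -> mu (S @^-1` A) = rho A) ->
  bounded_continuous f ->
  (\int[mu]_x (f (S x))%:E = \int[rho]_x (f x)%:E)%E.
Proof.
move=> cS muS bf.
have mf : measurable_fun (setT : set (borelT X)) (EFin \o f).
  by apply/measurable_EFinP; apply: continuous_borel_measurable_real; case: bf.
have intfS : mu.-integrable (S @^-1` setT) ((EFin \o f) \o S).
  by rewrite preimage_setT; exact: bounded_continuous_integrable (bounded_continuous_comp bf cS).
rewrite [LHS](_ : _ = \int[mu]_x ((EFin \o f) \o S) x)%E //.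
have mS := continuous_borel_measurable cS.
have := integral_pushforward mS mf intfS measurableT.
rewrite preimage_setT => <-.
by apply: eq_measure_integral => A mA _; exact: muS.
Qed.

Lemma measure_le_integral (mu : probability (borelT X) R) (K : set (borelT X))
    (g : X -> R) :
  measurable K -> measurable_fun (setT : set (borelT X)) g ->
  (forall x, 0 <= g x) -> (forall x, K x -> 1 <= g x) ->
  (mu K <= \int[mu]_x (g x)%:E)%E.
Proof.
move=> mK mg g0 gK; rewrite -(setIT K) -integral_indic //.
apply: ge0_le_integral => //.
- by apply/measurable_EFinP; exact: measurable_indic.
- by apply/measurable_EFinP.
- move=> x _; rewrite /indic lee_fin; case: (boolP (x \in K)) => [/set_mem|_].
    exact: gK.
  exact: g0.
Qed.

Lemma integral_le_measure (mu : probability (borelT X) R) (U : set (borelT X))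
    (g : X -> R) :
  measurable U -> measurable_fun (setT : set (borelT X)) g ->
  (forall x, 0 <= g x <= 1) -> (forall x, ~ U x -> g x = 0) ->
  (\int[mu]_x (g x)%:E <= mu U)%E.
Proof.
move=> mU mg g01 gU; rewrite -(setIT U) -integral_indic //.
apply: ge0_le_integral => //.
- by move=> x _; rewrite lee_fin; case/andP: (g01 x).
- by apply/measurable_EFinP.
- by apply/measurable_EFinP; exact: measurable_indic.
- move=> x _; rewrite /indic lee_fin; case: (boolP (x \in U)) => [_|/negP Ux].
    by case/andP: (g01 x).
  by rewrite gU // => Ux'; apply: Ux; exact: mem_set.
Qed.

End BoundedContinuousIntegrals.

Section Hausdorff.
Variables (R : realType) (X : ptopologicalType).
Hypothesis hsdfX : hausdorff_space X.

Let closed_set1 (x : X) : closed [set x].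
Proof. exact: accessible_closed_set1 (hausdorff_accessible hsdfX) x. Qed.

Lemma borel_compact_measurable (K : set X) :
  compact K -> measurable (K : set (borelT X)).
Proof. by move=> cK; apply: borel_closed_measurable; exact: compact_closed. Qed.

Lemma msupp_dirac (m : set (borelT X) -> \bar R) (y : X) :
  (forall A : set (borelT X), measurable A -> m A = \d_(y : borelT X) A) ->
  forall z, msupp m z <-> z = y.
Proof.
move=> my z; split => [zm|-> U oU Uy]; last first.
  by rewrite my ?diracE ?mem_set ?lte01 //; exact: borel_open_measurable.
apply: contrapT => zy.
have oCy : open (~` [set y]) by exact/closed_openC/closed_set1.
have := zm _ oCy zy; rewrite my ?diracE; last exact: borel_open_measurable.
by rewrite memNset ?ltxx //= => /(_ erefl).
Qed.

Lemma dirac_borel_inj (a b : X) :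
  (forall A : set (borelT X), measurable A ->
     \d_(a : borelT X) A = \d_(b : borelT X) A :> \bar R) -> a = b.
Proof.
move=> dab; have := dab [set b] (borel_closed_measurable (@closed_set1 b)).
rewrite !diracE [b \in _]mem_set //.
case: (boolP (a \in [set b])) => [/set_mem //|_].
by move/eqP; rewrite eqe (@eqr_nat R 0 1).
Qed.

End Hausdorff.

Section Urysohn.
Variables (R : realType) (X : ptopologicalType).
Hypotheses (hsdfX : hausdorff_space X) (lcX : locally_compact [set: X]).

(* Urysohn's lemma is only available for normal spaces; the one-point
   compactification of X is compact Hausdorff, hence normal. *)
Lemma urysohn_compact_open (K U : set X) : compact K -> open U -> K `<=` U ->
  exists f : X -> R, [/\ continuous f, forall x, 0 <= f x <= 1,
    forall x, K x -> f x = 1 & forall x, ~ U x -> f x = 0].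
Proof.
move=> cK oU KU; pose Y := one_point_compactification X.
have hY : hausdorff_space Y := one_point_compactification_hausdorff lcX hsdfX.
have nY : normal_space Y.
  by apply: compact_normal => //; exact: one_point_compactification_compact.
have clK : closed (Some @` K : set Y).
  apply: compact_closed => //; apply: continuous_compact => //.
  apply: continuous_subspaceT; exact: one_point_compactification_some_continuous.
have clCU : closed (~` (Some @` U) : set Y).
  exact/open_closedC/one_point_compactification_open_some.
have KCU : (Some @` K : set Y) `&` ~` (Some @` U) = set0.
  apply/seteqP; split => // _ [[k Kk <-]] /=; apply; exists k => //; exact: KU.
have /(uniform_separatorP (R := R)) [g [cg g01 gK gU]] :=
  (@normal_separatorP R Y).1 nY _ _ clK clCU KCU.
have g01' x : 0 <= g (Some x) <= 1.
  by have := g01 (g (Some x)) (ex_intro2 _ _ (Some x) I erefl); rewrite /= in_itv.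
exists (cst 1 - (g \o Some)); split => [x|x|x Kx|x Ux].
- apply: continuousB; first exact: cst_continuous.
  apply: continuous_comp; last exact: cg.
  exact: one_point_compactification_some_continuous.
- by case/andP: (g01' x) => g0 g1; rewrite !fctE /= subr_ge0 g1 lerBlDr lerDl.
- rewrite !fctE /= (_ : g (Some x) = 0) ?subr0 //.
  by apply: gK; exists (Some x) => //; exists x.
- rewrite !fctE /= (_ : g (Some x) = 1) ?subrr //.
  by apply: gU; exists (Some x) => //= -[y Uy [yx]]; apply: Ux; rewrite -yx.
Qed.

End Urysohn.

Section PushforwardFromIntegrals.
Variables (R : realType) (X : ptopologicalType).
Hypotheses (hsdfX : hausdorff_space X) (lcX : locally_compact [set: X]).
Variables (mu rho : probability (borelT X) R) (T : X -> X).
Hypotheses (mu_regular : regular_measure mu) (rho_regular : regular_measure rho).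
Hypothesis cT : continuous T.
Hypothesis integral_comp : forall f : X -> R, bounded_continuous f ->
  (\int[mu]_z (f (T z))%:E = \int[rho]_z (f z)%:E)%E.

Lemma pushforward_le (A : set (borelT X)) : measurable A ->
  (mu (T @^-1` A) <= rho A)%E.
Proof.
move=> mA; have mTA := continuous_preimage_measurable cT mA.
apply/lee_addgt0Pr => eps eps0.
have eps20 : 0 < eps / 2 by rewrite divr_gt0.
have [_ [K [cK KTA muK]]] := mu_regular mTA eps20.
have cTK : compact (T @` K).
  by apply: continuous_compact => //; apply: continuous_subspaceT => z; exact: cT.
have mTK := borel_compact_measurable hsdfX cTK.
have [[U [oU TKU rhoU]] _] := rho_regular mTK eps20.
have [g [cg g01 gTK gU]] := urysohn_compact_open R hsdfX lcX cTK oU TKU.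
have bg : bounded_continuous g.
  by split => //; exists 1 => z; case/andP: (g01 z) => g0 g1; rewrite ger0_norm.
have muKg : (mu K <= \int[mu]_z (g (T z))%:E)%E.
  apply: measure_le_integral (borel_compact_measurable hsdfX cK) _ _ _.
  - by apply: continuous_borel_measurable_real; case: (bounded_continuous_comp bg cT).
  - by move=> z; case/andP: (g01 (T z)).
  - by move=> z Kz; rewrite gTK //; exists z.
have grhoU : (\int[rho]_z (g z)%:E <= rho U)%E.
  apply: integral_le_measure (borel_open_measurable oU) _ g01 gU.
  exact: continuous_borel_measurable_real.
have rhoTK : (rho (T @` K) <= rho A)%E.
  by apply: le_measure; rewrite ?inE // => _ [z Kz <-]; exact: KTA.
(* mu (T^-1 A) <= mu K + eps/2 <= \int (g o T) dmu + eps/2 = \int g drho + eps/2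
   <= rho U + eps/2 <= rho (T K) + eps <= rho A + eps *)
apply: (le_trans muK); apply: (le_trans (leeD2r _ muKg)); rewrite integral_comp //.
apply: (le_trans (leeD2r _ grhoU)); apply: (le_trans (leeD2r _ rhoU)).
by rewrite -addeA -EFinD -splitr; exact: leeD2r.
Qed.

Lemma pushforward_eq (A : set (borelT X)) : measurable A ->
  mu (T @^-1` A) = rho A.
Proof.
move=> mA; apply/eqP; rewrite eq_le pushforward_le //=.
have := pushforward_le (measurableC mA).
rewrite preimage_setC !probability_setC //; last exact: continuous_preimage_measurable.
rewrite -(fineK (fin_num_measure _ _ mA)).
rewrite -(fineK (fin_num_measure _ _ (continuous_preimage_measurable cT mA))).
by rewrite -!EFinB !lee_fin lerD2l lerN2.
Qed.

End PushforwardFromIntegrals.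

Section HypergroupHomomorphism.
Variables (R : realType) (X : ptopologicalType).
Variables (conv : X -> X -> probability (borelT X) R) (e : X) (inv : X -> X).
Hypothesis hg : hypergroup conv e inv.
Variable T : X -> X.
Hypotheses (cT : continuous T) (homT : hg_hom_eq conv inv T).

Lemma hypergroup_inv_unit : inv e = e.
Proof.
have := (hg_supp_e hg e (inv e)).2 (esym (hg_inv_invol hg e)).
by move/(msupp_dirac (hg_hausdorff hg) (hg_unit_l hg (inv e)) e).1.
Qed.

Lemma hom_unit : T e = e.
Proof.
have conv_Te A : measurable A ->
    conv (T e) (inv (T e)) A = \d_(T (inv e) : borelT X) A.
  move=> mA; rewrite -homT // (hg_unit_l hg) //.
  exact: continuous_preimage_measurable.
have := (hg_supp_e hg (T e) (inv (T e))).2 (esym (hg_inv_invol hg (T e))).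
move/(msupp_dirac (hg_hausdorff hg) conv_Te e).1.
by rewrite hypergroup_inv_unit => <-.
Qed.

Lemma hom_inv y : T (inv y) = inv (T y).
Proof.
apply: (dirac_borel_inj (R := R) (hg_hausdorff hg)) => A mA.
have mTA := continuous_preimage_measurable cT mA.
transitivity (\d_(inv y : borelT X) (T @^-1` A) : \bar R); first by rewrite !diracE.
by rewrite -(hg_unit_l hg) // homT // hom_unit (hg_unit_l hg).
Qed.

Lemma hom_range_subhypergroup : closed (range T) -> subhypergroup conv inv (range T).
Proof.
move=> clT; split => //.
  by move=> _ [a _ <-]; exists (inv a) => //; exact: hom_inv.
move=> _ _ [a _ <-] [b _ <-] z supp_z; apply: contrapT => Tz.
have oCT := closed_openC clT; have := supp_z _ oCT Tz.
rewrite -[T b](hg_inv_invol hg) -hom_inv -homT; last exact: borel_open_measurable.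
have -> : T @^-1` (~` range T) = set0.
  by apply/seteqP; split => // w /=; apply; exists w.
by rewrite measure0 ltxx.
Qed.

End HypergroupHomomorphism.

Section PointwiseLimitOfHomomorphisms.
Variables (R : realType) (X : ptopologicalType).
Variables (conv : X -> X -> probability (borelT X) R) (e : X) (inv : X -> X).
Hypothesis hg : hypergroup conv e inv.
Variables (Tk : nat -> X -> X) (T : X -> X).
Hypothesis homTk : forall k, hg_homomorphism conv inv (Tk k).
Hypothesis cvgTk : forall x, Tk k x @[k --> \oo] --> T x.
Hypothesis cT : continuous T.

Lemma integral_comp_limit (f : X -> R) x y : bounded_continuous f ->
  (\int[conv x (inv y)]_z (f (T z))%:E =
   \int[conv (T x) (inv (T y))]_z (f z)%:E)%E.
Proof.
move=> bf; have [cf [M fM]] := bf; set mu := conv x (inv y).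
have mfTk k : measurable_fun setT (fun z : borelT X => (f (Tk k z))%:E).
  apply/measurable_EFinP; apply: continuous_borel_measurable_real.
  by case: (bounded_continuous_comp bf (proj1 (homTk k))).
have mfT : measurable_fun setT (fun z : borelT X => (f (T z))%:E).
  apply/measurable_EFinP; apply: continuous_borel_measurable_real.
  by case: (bounded_continuous_comp bf cT).
have cvg_fTk : {ae mu, forall z : borelT X, setT z ->
    (fun k => (f (Tk k z))%:E) @ \oo --> (f (T z))%:E}.
  apply: aeW => z _; apply/fine_cvgP; split; first by near=> k.
  have := @continuous_cvg _ _ _ _ _ _ _ _ (cf (T z)) (@cvgTk z).
  by apply; exact: _.
have intM : mu.-integrable setT (cst M%:E : borelT X -> \bar R).
  exact: finite_measure_integrable_cst.
have fTkM : {ae mu, forall (z : borelT X) k, setT z ->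
    (`|(f (Tk k z))%:E| <= cst M%:E z)%E}.
  by apply: aeW => z k _ /=; rewrite lee_fin.
have [_ _ cvg_lhs] := dominated_convergence measurableT mfTk mfT cvg_fTk intM fTkM.
have cvg_rhs : (fun k => (Rintegral (conv (Tk k x) (inv (Tk k y))) setT f)%:E) @ \oo
    --> (Rintegral (conv (T x) (inv (T y))) setT f)%:E.
  apply/fine_cvgP; split; first by near=> k.
  apply: (@continuous2_cvg _ _ _ _ _ _ _ _ (fun a b => Rintegral (conv a b) setT f)).
  - have weak_cont := hg_weak_cont hg bf; exact: (weak_cont (T x, inv (T y))).
  - exact: (@cvgTk x).
  - exact: (@continuous_cvg _ _ _ _ _ _ _ _ (@hg_inv_cont _ _ _ _ _ hg (T y)) (@cvgTk y)).
have lhsE : (fun k => \int[mu]_z (f (Tk k z))%:E)%E =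
    (fun k => (Rintegral (conv (Tk k x) (inv (Tk k y))) setT f)%:E).
  apply/funext => k; rewrite -integral_bounded_continuousE //.
  exact: integral_pushforward_bounded_continuous (proj1 (homTk k)) (proj2 (homTk k) x y) bf.
rewrite /= lhsE in cvg_lhs; rewrite [RHS]integral_bounded_continuousE //.
exact: (cvg_unique (@ereal_hausdorff R) cvg_lhs cvg_rhs).
Unshelve. all: end_near. Qed.

Lemma limit_hom_eq : hg_hom_eq conv inv T.
Proof.
move=> x y A mA.
apply: (pushforward_eq (hg_hausdorff hg) (hg_locally_compact hg)
  (hg_regular hg _ _) (hg_regular hg _ _) cT _ mA) => f bf.
exact: integral_comp_limit.
Qed.

End PointwiseLimitOfHomomorphisms.

Theorem mainTheorem7 (R : realType) (X : ptopologicalType)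
  (conv : X -> X -> probability (borelT X) R) (e : X) (inv : X -> X)
  (Tk : nat -> X -> X) (T : X -> X) :
  commutative_hypergroup conv e inv ->
  (forall k, hg_automorphism conv inv (Tk k)) ->
  (forall x, Tk k x @[k --> \oo] --> T x) ->
  continuous T ->
  closed (range T) ->
  subhypergroup conv inv (range T) /\ hg_hom_eq conv inv T.
Proof.
move=> [hg _] autTk cvgTk cT clT.
have homTk k : hg_homomorphism conv inv (Tk k).
  by have [S [_ _ homTk_k _]] := autTk k.
have homT := limit_hom_eq hg homTk cvgTk cT.
split; last exact: homT.
exact: (hom_range_subhypergroup hg cT homT clT).
Qed.
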